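(* Let $a,b\in(0,1)$ and $c_1,c_2>0$ with $ac_1<1$, $ac_2<1$. For every $x,y\in\mathbb Z_{\ge0}$, with all matrix products and series understood entrywise, $$\mathbf M^{\rightarrow}_x[a]\mathbf M^{\downarrow}_y[b]=(ab)^{\min\{x,y\}}(1-ab)\sum_{z\ge\max\{0,y-x\}}\mathbf M^{\downarrow}_z[b]\mathbf M^{\rightarrow}_{x-y+z}[a],$$ $$\mathbf w^t\mathbf M^{\downarrow}_x[a]=(ac_1)^x(1-ac_1)\sum_{y\ge0}\mathbf w^t\mathbf M^{\rightarrow}_y[a],\qquad \mathbf M^{\rightarrow}_x[a]\mathbf v=(ac_2)^x(1-ac_2)\sum_{y\ge0}\mathbf M^{\downarrow}_y[a]\mathbf v.$$
   Context: For $x\in\mathbb Z_{\ge0}$ and $a\in(0,1)$, $\mathbf M^{\rightarrow}_x[a]$ and $\mathbf M^{\downarrow}_x[a]$ are the infinite matrices indexed by $\mathbb Z_{\ge0}\times\mathbb Z_{\ge0}$ with entries $\mathbf M^{\rightarrow}_x[a](n,n')=a^{2x+n-n'}\mathbf 1_{n'\ge x}\mathbf 1_{x+n-n'\ge0}$ and $\mathbf M^{\downarrow}_x[a](n,n')=\mathbf M^{\rightarrow}_x[a](n',n)=a^{2x+n'-n}\mathbf 1_{n\ge x}\mathbf 1_{x+n'-n\ge0}$. The vectors $\mathbf w,\mathbf v\in\mathbb R^{\mathbb Z_{\ge0}}$ are $\mathbf w(n)=c_1^n$, $\mathbf v(n)=c_2^n$. *)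

From Stdlib Require Import Reals Arith.
From Coquelicot Require Import Coquelicot.
Open Scope R_scope.

Definition imat := nat -> nat -> R.
Definition ivec := nat -> R.

Definition Mright (x : nat) (a : R) : imat := fun n n' =>
  if andb (Nat.leb x n') (Nat.leb n' (x + n)) then a ^ (2 * x + n - n') else 0.

Definition Mdown (x : nat) (a : R) : imat := fun n n' => Mright x a n' n.

Definition geomvec (c : R) : ivec := fun n => c ^ n.

Definition mmul_terms (A B : imat) (n n' : nat) : nat -> R := fun k => A n k * B k n'.
Definition mmul (A B : imat) : imat := fun n n' => Series (mmul_terms A B n n').

Definition vmul_terms (w : ivec) (M : imat) (n' : nat) : nat -> R := fun n => w n * M n n'.
Definition vmul (w : ivec) (M : imat) : ivec := fun n' => Series (vmul_terms w M n').

Definition mvmul_terms (M : imat) (v : ivec) (n : nat) : nat -> R := fun n' => M n n' * v n'.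
Definition mvmul (M : imat) (v : ivec) : ivec := fun n => Series (mvmul_terms M v n).

From Stdlib Require Import Reals Lia Lra FunctionalExtensionality.
From Coquelicot Require Import Coquelicot.
Open Scope R_scope.

(* Each entry on the left is a finite sum: the indicators in the matrices
   confine the summation index k to [0, N].  Each entry on the right is a
   geometric tail with ratio ab (resp. ac) and sums in closed form; after
   multiplication by the prefactor (ab)^min(x,y) (1-ab) (resp. (ac)^x (1-ac))
   the j-th term of the right-hand series is exactly the (N-j)-th term of the
   left-hand sum.  The third identity is the transpose of the second. *)

Lemma sum_n_finite_support (u : nat -> R) (N m : nat) :
  (forall k, (N < k)%nat -> u k = 0) -> (N <= m)%nat -> sum_n u m = sum_n u N.
Proof.
  intros Hu Hm; induction Hm as [|m Hm IH]; [reflexivity|].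
  rewrite sum_Sn, IH, Hu by lia.
  apply Rplus_0_r.
Qed.

Lemma is_series_finite_support (u : nat -> R) (N : nat) :
  (forall k, (N < k)%nat -> u k = 0) -> is_series u (sum_n u N).
Proof.
  intros Hu.
  apply (filterlim_ext_loc (fun _ => sum_n u N)); [|apply filterlim_const].
  exists N; intros m Hm; symmetry; exact (sum_n_finite_support u N m Hu Hm).
Qed.

Lemma is_series_zero (u : nat -> R) : (forall k, u k = 0) -> is_series u 0.
Proof.
  intros Hu; rewrite <- (Hu 0%nat), <- sum_O.
  apply is_series_finite_support; intros k _; apply Hu.
Qed.

Lemma is_series_zero_prefix (u : nat -> R) (K : nat) (l : R) :
  (forall k, (k < K)%nat -> u k = 0) ->
  is_series (fun k => u (K + k)%nat) l -> is_series u l.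
Proof.
  revert u; induction K as [|K IH]; intros u Hu Hl; [exact Hl|].
  apply (is_series_decr_n u 1); [lia|]; simpl pred.
  match goal with |- is_series _ ?l' => replace l' with l end;
    [|rewrite sum_O, Hu by lia; unfold plus, opp; simpl; ring].
  apply (IH (fun k => u (S k))); [intros k Hk; apply Hu; lia|exact Hl].
Qed.

Lemma is_series_shifted_geom (u : nat -> R) (K : nat) (C q : R) :
  Rabs q < 1 ->
  (forall k, (k < K)%nat -> u k = 0) ->
  (forall k, u (K + k)%nat = C * q ^ k) ->
  is_series u (C / (1 - q)).
Proof.
  intros Hq Hprefix Hgeom.
  apply (is_series_zero_prefix u K); [exact Hprefix|].
  apply (is_series_ext (fun k => scal C (q ^ k))); [intros k; symmetry; apply Hgeom|].
  apply (is_series_scal_l C _ (/ (1 - q))), is_series_geom, Hq.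
Qed.

Lemma is_series_reverse_finite (t f : nat -> R) (N : nat) :
  (forall k, (N < k)%nat -> t k = 0) ->
  (forall j, f j = if (j <=? N)%nat then t (N - j)%nat else 0) ->
  is_series f (sum_n t N).
Proof.
  intros Ht Hf.
  assert (Hf0 : forall k, (N < k)%nat -> f k = 0).
  { intros k Hk; rewrite Hf; destruct (Nat.leb_spec k N); [lia|reflexivity]. }
  replace (sum_n t N) with (sum_n f N); [exact (is_series_finite_support f N Hf0)|].
  rewrite !sum_n_Reals, <- (sum_f_R0_skip t N).
  apply sum_eq; intros j Hj.
  rewrite Hf; destruct (Nat.leb_spec j N); [reflexivity|lia].
Qed.

Ltac case_indicators :=
  repeat match goal with |- context [Nat.leb ?p ?q] => destruct (Nat.leb_spec p q) end;
  cbn [andb].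

Lemma is_series_vmul_geomvec_Mright (a c : R) (y n' : nat) :
  Rabs (a * c) < 1 ->
  is_series (vmul_terms (geomvec c) (Mright y a) n')
    (if (y <=? n')%nat then c ^ (n' - y) * a ^ y / (1 - a * c) else 0).
Proof.
  intros Hac; destruct (Nat.leb_spec y n').
  - apply (is_series_shifted_geom _ (n' - y)); [exact Hac| |].
    + intros k Hk; unfold vmul_terms, Mright; case_indicators; try lia; ring.
    + intros k; unfold vmul_terms, Mright, geomvec; case_indicators; try lia.
      replace (2 * y + (n' - y + k) - n')%nat with (y + k)%nat by lia.
      rewrite !pow_add, Rpow_mult_distr; ring.
  - apply is_series_zero; intros k.
    unfold vmul_terms, Mright; case_indicators; try lia; ring.
Qed.

Lemma pow_mult_rearrange (a b d : R) (m p q P Q : nat) :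
  d <> 0 -> P = (m + p)%nat -> Q = (m + q)%nat ->
  (a * b) ^ m * d * (b ^ q * a ^ p / d) = a ^ P * b ^ Q.
Proof. intros Hd -> ->; rewrite !pow_add, Rpow_mult_distr; field; exact Hd. Qed.

Lemma vmul_geomvec_Mdown_expansion (a c : R) (x n' : nat) :
  Rabs (a * c) < 1 ->
  ex_series (vmul_terms (geomvec c) (Mdown x a) n') /\
  (forall y : nat, ex_series (vmul_terms (geomvec c) (Mright y a) n')) /\
  is_series
    (fun y : nat => (a * c) ^ x * (1 - a * c) * vmul (geomvec c) (Mright y a) n')
    (vmul (geomvec c) (Mdown x a) n').
Proof.
  intros Hac.
  set (t := vmul_terms (geomvec c) (Mdown x a) n').
  assert (Ht_support : forall k, (x + n' < k)%nat -> t k = 0).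
  { intros k Hk; unfold t, vmul_terms, Mdown, Mright; case_indicators; try lia; ring. }
  pose proof (is_series_finite_support t _ Ht_support) as Ht.
  assert (Hac1 : 1 - a * c <> 0) by (apply Rabs_lt_between in Hac; lra).
  split; [eexists; exact Ht|].
  split; [intros y; eexists; apply is_series_vmul_geomvec_Mright, Hac|].
  unfold vmul at 2; fold t; rewrite (is_series_unique _ _ Ht).
  apply is_series_reverse_finite; [exact Ht_support|].
  intros y; unfold vmul.
  rewrite (is_series_unique _ _ (is_series_vmul_geomvec_Mright a c y n' Hac)).
  unfold t, vmul_terms, Mdown, Mright, geomvec; case_indicators; try lia; try ring.
  rewrite (Rmult_comm (c ^ (x + n' - y))); apply pow_mult_rearrange; [exact Hac1|lia|lia].
Qed.

Lemma is_series_mmul_Mdown_Mright (a b : R) (z w n n' : nat) :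
  Rabs (a * b) < 1 ->
  is_series (mmul_terms (Mdown z b) (Mright w a) n n')
    (if andb (z <=? n)%nat (w <=? n')%nat then
       b ^ (2 * z + Nat.max (n - z) (n' - w) - n)
       * a ^ (2 * w + Nat.max (n - z) (n' - w) - n') / (1 - a * b)
     else 0).
Proof.
  intros Hab; set (K := Nat.max (n - z) (n' - w)).
  destruct (Nat.leb_spec z n), (Nat.leb_spec w n'); cbn [andb];
    try (apply is_series_zero; intros k;
         unfold mmul_terms, Mdown, Mright; case_indicators; try lia; ring).
  apply (is_series_shifted_geom _ K); [exact Hab| |].
  - intros k Hk; unfold mmul_terms, Mdown, Mright; case_indicators; try lia; ring.
  - intros k; unfold mmul_terms, Mdown, Mright; case_indicators; try lia.
    replace (2 * z + (K + k) - n)%nat with ((2 * z + K - n) + k)%nat by lia.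
    replace (2 * w + (K + k) - n')%nat with ((2 * w + K - n') + k)%nat by lia.
    rewrite !pow_add, Rpow_mult_distr; ring.
Qed.

Lemma mmul_Mright_Mdown_expansion (a b : R) (x y n n' : nat) :
  Rabs (a * b) < 1 ->
  ex_series (mmul_terms (Mright x a) (Mdown y b) n n') /\
  (forall z : nat,
     ex_series (mmul_terms (Mdown z b) (Mright (x + z - y) a) n n')) /\
  is_series
    (fun j : nat =>
       let z := ((y - x) + j)%nat in
       (a * b) ^ (Nat.min x y) * (1 - a * b)
       * mmul (Mdown z b) (Mright (x + z - y) a) n n')
    (mmul (Mright x a) (Mdown y b) n n').
Proof.
  intros Hab.
  set (t := mmul_terms (Mright x a) (Mdown y b) n n').
  set (N := Nat.min (x + n) (y + n')).
  assert (Ht_support : forall k, (N < k)%nat -> t k = 0).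
  { intros k Hk; unfold t, mmul_terms, Mdown, Mright; case_indicators; try lia; ring. }
  pose proof (is_series_finite_support t _ Ht_support) as Ht.
  assert (Hab1 : 1 - a * b <> 0) by (apply Rabs_lt_between in Hab; lra).
  split; [eexists; exact Ht|].
  split; [intros z; eexists; apply is_series_mmul_Mdown_Mright, Hab|].
  unfold mmul at 2; fold t; rewrite (is_series_unique _ _ Ht).
  apply is_series_reverse_finite; [exact Ht_support|].
  intros j; cbv zeta; unfold mmul.
  rewrite (is_series_unique _ _ (is_series_mmul_Mdown_Mright _ _ _ _ _ _ Hab)).
  unfold t, N, mmul_terms, Mdown, Mright; case_indicators; try lia; try ring.
  apply pow_mult_rearrange; [exact Hab1|lia|lia].
Qed.

Definition mtr (M : imat) : imat := fun n n' => M n' n.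

Lemma mvmul_terms_mtr (M : imat) (v : ivec) (n : nat) :
  mvmul_terms M v n = vmul_terms v (mtr M) n.
Proof. apply functional_extensionality; intros k; apply Rmult_comm. Qed.

Lemma mvmul_mtr (M : imat) (v : ivec) (n : nat) :
  mvmul M v n = vmul v (mtr M) n.
Proof. unfold mvmul, vmul; rewrite mvmul_terms_mtr; reflexivity. Qed.

Lemma mvmul_Mright_geomvec_expansion (a c : R) (x n : nat) :
  Rabs (a * c) < 1 ->
  ex_series (mvmul_terms (Mright x a) (geomvec c) n) /\
  (forall y : nat, ex_series (mvmul_terms (Mdown y a) (geomvec c) n)) /\
  is_series
    (fun y : nat => (a * c) ^ x * (1 - a * c) * mvmul (Mdown y a) (geomvec c) n)
    (mvmul (Mright x a) (geomvec c) n).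
Proof.
  intros Hac.
  destruct (vmul_geomvec_Mdown_expansion a c x n Hac) as (Hex & Hex_y & Hser).
  split; [rewrite mvmul_terms_mtr; exact Hex|].
  split; [intros y; rewrite mvmul_terms_mtr; exact (Hex_y y)|].
  rewrite mvmul_mtr; eapply is_series_ext; [|exact Hser].
  intros y; rewrite mvmul_mtr; reflexivity.
Qed.

Theorem proposition2p21 (a b c1 c2 : R)
  (ha : 0 < a < 1) (hb : 0 < b < 1) (hc1 : 0 < c1) (hc2 : 0 < c2)
  (hac1 : a * c1 < 1) (hac2 : a * c2 < 1) :
  (* first identity; z ranges over z >= max(0, y-x), written z = (y - x)%nat + j *)
  (forall (x y n n' : nat),
     ex_series (mmul_terms (Mright x a) (Mdown y b) n n') /\
     (forall z : nat,
        ex_series (mmul_terms (Mdown z b) (Mright (x + z - y) a) n n')) /\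
     is_series
       (fun j : nat =>
          let z := ((y - x) + j)%nat in
          (a * b) ^ (Nat.min x y) * (1 - a * b)
          * mmul (Mdown z b) (Mright (x + z - y) a) n n')
       (mmul (Mright x a) (Mdown y b) n n')) /\
  (* second identity *)
  (forall (x n' : nat),
     ex_series (vmul_terms (geomvec c1) (Mdown x a) n') /\
     (forall y : nat, ex_series (vmul_terms (geomvec c1) (Mright y a) n')) /\
     is_series
       (fun y : nat => (a * c1) ^ x * (1 - a * c1) * vmul (geomvec c1) (Mright y a) n')
       (vmul (geomvec c1) (Mdown x a) n')) /\
  (* third identity *)
  (forall (x n : nat),
     ex_series (mvmul_terms (Mright x a) (geomvec c2) n) /\
     (forall y : nat, ex_series (mvmul_terms (Mdown y a) (geomvec c2) n)) /\
     is_series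
       (fun y : nat => (a * c2) ^ x * (1 - a * c2) * mvmul (Mdown y a) (geomvec c2) n)
       (mvmul (Mright x a) (geomvec c2) n)).
Proof.
  assert (Hab : Rabs (a * b) < 1).
  { rewrite Rabs_pos_eq by (apply Rmult_le_pos; lra).
    apply Rle_lt_trans with (1 * b); [apply Rmult_le_compat_r|]; lra. }
  assert (Hac : forall c, 0 < c -> a * c < 1 -> Rabs (a * c) < 1).
  { intros c Hc Hlt; rewrite Rabs_pos_eq by (apply Rmult_le_pos; lra); exact Hlt. }
  split; [|split].
  - intros x y n n'; exact (mmul_Mright_Mdown_expansion a b x y n n' Hab).
  - intros x n'; exact (vmul_geomvec_Mdown_expansion a c1 x n' (Hac c1 hc1 hac1)).
  - intros x n; exact (mvmul_Mright_geomvec_expansion a c2 x n (Hac c2 hc2 hac2)).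
Qed.
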